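(* Let $p$ be an odd prime and $M$ the sub-add move matrix. Then every directed cycle in $\Gamma_{M,\,p}$ has length $1$, $s$ or $k$ (where $s$ and $k$ need not be distinct).
   Context: The sub-add move matrix is $M=\begin{pmatrix}1&-1\\1&1\end{pmatrix}$. For $n\in\mathbb N$, $\Gamma_{M,\,n}$ is the directed graph with vertex set $\mathbb Z_n^2$ and arcs $((a,b),(a-b,a+b))$ (mod $n$; loops allowed). A directed cycle is a cycle in the underlying undirected graph such that in the induced directed subgraph every vertex has in- and out-degree $1$; a loop is a directed $1$-cycle, a pair of opposite arcs a directed $2$-cycle. Let $t$ be the multiplicative order of $-4$ in $GF(p)$ and $k=4t$ (which is the $\mathbb Z_p$-order of $M$, i.e. the least positive $k$ with $M^k\equiv I \bmod p$). Let $i\in GF(p^2)$ satisfy $i^2=-1$, the choice of square root of $-1$ being made so that ${\rm ord}(1-i)\le{\rm ord}(1+i)$ (multiplicative orders in $GF(p^2)$), and let $s={\rm ord}(1-i)$. *)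

From HB Require Import structures.
From mathcomp Require Import all_boot all_order all_algebra all_field.
Set Implicit Arguments. Unset Strict Implicit. Unset Printing Implicit Defensive.
Import GRing.Theory.
Local Open Scope ring_scope.

(* The sub-add move matrix M = [[1,-1],[1,1]] acting on column vectors (a,b)^T:
   M (a,b)^T = (a - b, a + b)^T.  Vertices of Gamma_{M,p} are pairs in Z_p^2. *)
Definition subadd_move (p : nat) (v : 'F_p * 'F_p) : 'F_p * 'F_p :=
  (v.1 - v.2, v.1 + v.2).

Definition Gamma_arc (p : nat) : rel ('F_p * 'F_p) :=
  fun x y => y == subadd_move x.

(* A loop is a 1-cycle, a pair of opposite arcs a 2-cycle. *)
Definition directed_cycle (T : eqType) (e : rel T) (c : seq T) : bool :=
  [&& c != [::], uniq c & cycle e c].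

From mathcomp Require Import all_boot all_order all_algebra all_field.
From mathcomp Require Import ring.
Set Implicit Arguments.
Unset Strict Implicit.
Unset Printing Implicit Defensive.
Import GRing.Theory.
Local Open Scope ring_scope.

(* In a field F containing GF(p) and a square root i of -1, the linear forms
   a + i b and a - i b diagonalise the move: one step multiplies them by 1 + i
   and 1 - i respectively.  Hence a vertex returns to itself after m steps iff
   every nonzero form has its multiplier raised to the m-th power equal to 1,
   so its period is 1, ord(1 - i), ord(1 + i) or their lcm.  Since
   (1 + i)^4 = (1 - i)^4 = -4, each of the two orders divides four times the
   other, which forces ord(1 - i) | ord(1 + i); and 1 + i = i (1 - i) with i of
   order 4 gives ord(1 + i) = 4t.  A directed cycle is an orbit of the
   move, so its length is the period of any of its vertices. *)

Lemma dvdn_of_mutual_pfactor_dvdn q k a b : prime q -> (0 < a)%N -> (a <= b)%N ->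
  (a %| q ^ k * b)%N -> (b %| q ^ k * a)%N -> (a %| b)%N.
Proof.
move=> q_pr a_gt0 le_ab dv_ab dv_ba.
(* Past g = gcd(a, b) both cofactors divide q^k, so they are powers of q. *)
set g := gcdn a b; have g_gt0 : (0 < g)%N by rewrite gcdn_gt0 a_gt0.
have [a' Da] : exists a', a = (a' * g)%N by exists (a %/ g)%N; rewrite divnK ?dvdn_gcdl.
have [b' Db] : exists b', b = (b' * g)%N by exists (b %/ g)%N; rewrite divnK ?dvdn_gcdr.
have co_ab : coprime a' b'.
  by rewrite /coprime -(eqn_pmul2r g_gt0) mul1n muln_gcdl -Da -Db.
move: le_ab dv_ab dv_ba; rewrite Da Db leq_pmul2r // !mulnA !dvdn_pmul2r //.
rewrite Gauss_dvdl // [(b' %| _)%N]Gauss_dvdl 1?coprime_sym // => le_ab.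
move=> /(dvdn_pfactor _ _ q_pr)[x _ Da'] /(dvdn_pfactor _ _ q_pr)[y _ Db'].
by move: le_ab; rewrite Da' Db' leq_exp2l ?prime_gt1 // => le_xy; apply: dvdn_exp2l.
Qed.

Lemma order_eq_period (T : finType) (f : T -> T) x n :
  iter (order f x) f x = x -> (forall m, (iter m f x == x) = (n %| m)%N) ->
  order f x = n.
Proof.
move=> fx_order period.
have n_dvd : (n %| order f x)%N by rewrite -period fx_order.
have n_gt0 : (0 < n)%N by apply: dvdn_gt0 n_dvd.
apply/eqP; rewrite eqn_leq (dvdn_leq _ n_dvd) // andbT leqNgt.
apply/negP => /findex_iter; have /eqP -> : iter n f x == x by rewrite period.
by rewrite findex0 => n0; rewrite -n0 in n_gt0.
Qed.

Lemma sqrtN1_prim_root4 (R : idomainType) (z : R) :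
  (2%:R : R) != 0 -> z ^+ 2 = -1 -> 4.-primitive_root z.
Proof.
move=> two_neq0 z2.
have z4 : z ^+ 4 = 1 by ring: z2.
have [m prim_m m_dvd4] := prim_order_exists (isT : (0 < 4)%N) z4.
suff m4 : m = 4%N by rewrite -m4.
have : ~~ (m %| 2)%N by rewrite (prim_order_dvd prim_m) z2 eq_sym -addr_eq0 -mulr2n.
by move: m_dvd4 (dvdn_leq (isT : (0 < 4)%N) m_dvd4); case: m {prim_m} => [|[|[|[|[|]]]]].
Qed.

Section SubAddMove.

Variables (p : nat) (F : finFieldType) (charF : p \in [pchar F]).
Hypothesis odd_p : odd p.
Variables (i : F) (i2 : i ^+ 2 = -1).

Local Notation f := (@subadd_move p).

Definition Fp_embed : {rmorphism 'F_p -> pPrimeCharType charF} := in_alg _.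

Definition eigen_plus (v : 'F_p * 'F_p) : F := Fp_embed v.1 + i * Fp_embed v.2.
Definition eigen_minus (v : 'F_p * 'F_p) : F := Fp_embed v.1 - i * Fp_embed v.2.

Lemma two_neq0 : (2%:R : F) != 0.
Proof.
rewrite -(dvdn_pcharf charF) (dvdn_prime2 (pcharf_prime charF)) //.
by apply: contraTN odd_p => /eqP ->.
Qed.

Lemma i_neq0 : i != 0.
Proof. by apply: contra_eq_neq i2 => ->; rewrite expr0n eq_sym oppr_eq0 oner_eq0. Qed.


Lemma eigen_plus_move v : eigen_plus (f v) = (1 + i) * eigen_plus v.
Proof. by rewrite /eigen_plus /subadd_move rmorphB rmorphD; ring: i2. Qed.

Lemma eigen_minus_move v : eigen_minus (f v) = (1 - i) * eigen_minus v.
Proof. by rewrite /eigen_minus /subadd_move rmorphB rmorphD; ring: i2. Qed.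

Lemma eigen_plus_iter m v : eigen_plus (iter m f v) = (1 + i) ^+ m * eigen_plus v.
Proof.
elim: m => [|m IHm]; first by rewrite mul1r.
by rewrite iterS eigen_plus_move IHm exprS mulrA.
Qed.

Lemma eigen_minus_iter m v : eigen_minus (iter m f v) = (1 - i) ^+ m * eigen_minus v.
Proof.
elim: m => [|m IHm]; first by rewrite mul1r.
by rewrite iterS eigen_minus_move IHm exprS mulrA.
Qed.

Lemma eigen_inj v w :
  eigen_plus v = eigen_plus w -> eigen_minus v = eigen_minus w -> v = w.
Proof.
have sum u : 2%:R * Fp_embed u.1 = eigen_plus u + eigen_minus u :> F.
  by rewrite /eigen_plus /eigen_minus; ring.
have dif u : (2%:R * i) * Fp_embed u.2 = eigen_plus u - eigen_minus u :> F.
  by rewrite /eigen_plus /eigen_minus; ring.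
move=> Ep Em; move: (sum v) (dif v); rewrite Ep Em -sum -dif.
move=> /(mulfI two_neq0)/fmorph_inj E1 /(mulfI (mulf_neq0 two_neq0 i_neq0))/fmorph_inj E2.
by case: v w {Ep Em} E1 E2 => [a b] [c d] /= -> ->.
Qed.

Lemma iter_subadd_move_fixed m v : (iter m f v == v) =
  ((eigen_plus v == 0) || ((1 + i) ^+ m == 1)) &&
  ((eigen_minus v == 0) || ((1 - i) ^+ m == 1)).
Proof.
have scale_fixed (z x : F) : (z * x == x) = (x == 0) || (z == 1).
  by rewrite -subr_eq0 -{2}[x]mul1r -mulrBl mulf_eq0 subr_eq0 orbC.
rewrite -!scale_fixed -eigen_plus_iter -eigen_minus_iter.
apply/eqP/andP => [-> // | [/eqP Ep /eqP Em]]; exact: eigen_inj.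
Qed.

Lemma expr4_1pi : (1 + i) ^+ 4 = - 4%:R.
Proof. by ring: i2. Qed.

Lemma expr4_1mi : (1 - i) ^+ 4 = - 4%:R.
Proof. by ring: i2. Qed.

Variables (s s' t : nat).
Hypotheses (hs : s.-primitive_root (1 - i)) (hs' : s'.-primitive_root (1 + i)).
Hypotheses (hss' : (s <= s')%N) (ht : t.-primitive_root (- 4 : 'F_p)).

Lemma exprN4_eq1 n : ((- 4%:R : F) ^+ n == 1) = (t %| n)%N.
Proof.
rewrite (prim_order_dvd ht) -(inj_eq (fmorph_inj Fp_embed)).
by rewrite rmorphXn rmorphN rmorph_nat rmorph1.
Qed.

Lemma dvdn_4t_common_period L :
  (1 + i) ^+ L = 1 -> (1 - i) ^+ L = 1 -> (4 * t %| L)%N.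
Proof.
move=> pL mL.
have iL : i ^+ L = 1.
  by move: pL; rewrite (_ : 1 + i = i * (1 - i)); [rewrite exprMn mL mulr1 | ring: i2].
have /dvdnP[q Lq] : (4 %| L)%N.
  by rewrite (prim_order_dvd (sqrtN1_prim_root4 two_neq0 i2)) iL.
rewrite Lq [(q * 4)%N]mulnC dvdn_pmul2l // -exprN4_eq1 -expr4_1pi -exprM.
by rewrite mulnC -Lq pL.
Qed.

Lemma ord_1mi_dvd_ord_1pi : (s %| s')%N.
Proof.
have same4 n : (1 - i) ^+ (4 * n) = (1 + i) ^+ (4 * n).
  by rewrite !exprM expr4_1pi expr4_1mi.
apply: (@dvdn_of_mutual_pfactor_dvdn 2 2) => //; first exact: prim_order_gt0 hs.
  by rewrite (prim_order_dvd hs) same4 mulnC exprM (prim_expr_order hs') expr1n.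
by rewrite (prim_order_dvd hs') -same4 mulnC exprM (prim_expr_order hs) expr1n.
Qed.

Lemma ord_1pi_eq : s' = (4 * t)%N.
Proof.
apply/eqP; rewrite eqn_dvd; apply/andP; split.
  by rewrite (prim_order_dvd hs') exprM expr4_1pi exprN4_eq1.
apply: dvdn_4t_common_period; first exact: prim_expr_order.
by apply/eqP; rewrite -(prim_order_dvd hs) ord_1mi_dvd_ord_1pi.
Qed.

Lemma iter_subadd_move_period v : exists2 n, n \in [:: 1; s; 4 * t]%N &
  forall m, (iter m f v == v) = (n %| m)%N.
Proof.
rewrite -ord_1pi_eq.
have [p0|pn0] := eqVneq (eigen_plus v) 0; have [m0|mn0] := eqVneq (eigen_minus v) 0.
- by exists 1%N => [|m]; rewrite ?inE ?eqxx // iter_subadd_move_fixed p0 m0 eqxx dvd1n.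
- exists s => [|m]; first by rewrite !inE eqxx orbT.
  by rewrite iter_subadd_move_fixed p0 eqxx (negbTE mn0) (prim_order_dvd hs).
- exists s' => [|m]; first by rewrite !inE eqxx !orbT.
  by rewrite iter_subadd_move_fixed m0 eqxx (negbTE pn0) andbT (prim_order_dvd hs').
exists s' => [|m]; first by rewrite !inE eqxx !orbT.
rewrite iter_subadd_move_fixed (negbTE pn0) (negbTE mn0) /=.
rewrite -(prim_order_dvd hs) -(prim_order_dvd hs') andb_idr //.
exact: dvdn_trans ord_1mi_dvd_ord_1pi.
Qed.

End SubAddMove.

Unset Implicit Arguments.

Theorem proposition7p1 (p : nat) (pr_p : prime p) (odd_p : odd p)
    (F : finFieldType) (charF : p \in [pchar F]) (cardF : #|F| = (p ^ 2)%N)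
    (i : F) (hi : i ^+ 2 = -1)
    (s s' : nat) (hs : s.-primitive_root (1 - i)) (hs' : s'.-primitive_root (1 + i))
    (hss' : (s <= s')%N)
    (t : nat) (ht : t.-primitive_root (- 4 : 'F_p))
    (c : seq ('F_p * 'F_p)) (hc : directed_cycle (@Gamma_arc p) c) :
  size c = 1%N \/ size c = s \/ size c = (4 * t)%N.
Proof.
case/and3P: hc; case: c => [//|x c] _ uniq_c cycle_c.
have fcycle_c : fcycle (@subadd_move p) (x :: c).
  by rewrite -(@eq_cycle _ (@Gamma_arc p)) // => u v; rewrite /Gamma_arc eq_sym.
have x_c := mem_head x c.
have [n n_in period] := iter_subadd_move_period charF odd_p hi hs hs' hss' ht x.
have x_order := iter_order_cycle fcycle_c x_c x_c.
rewrite -(order_cycle fcycle_c uniq_c x_c) (order_eq_period x_order period).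
by move: n_in; rewrite !inE => /or3P[] /eqP ->; auto.
Qed.
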